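(* Let $G\subseteq\mathrm{O}_n(\mathbb{R})$ be a finite group with fundamental invariants $\pi_1,\dots,\pi_m$, Hilbert map $\Pi=(\pi_1,\dots,\pi_m)$ and matrix $M_\Pi=(\langle d\pi_i,d\pi_j\rangle)_{1\le i,j\le m}$. The following are equivalent: (i) $\Pi(\mathbb{R}^n)=\{z\in V_{\mathbb{R}}(I_\Pi) \mid \phi_z(M_\Pi)\text{ is positive semi-definite}\}$. (ii) For every ring homomorphism $\phi:\mathbb{R}[\underline{X}]^G\to\mathbb{R}$: $\phi$ extends to a ring homomorphism $\tilde\phi:\mathbb{R}[\underline{X}]\to\mathbb{R}$ if and only if $\phi(\langle df,df\rangle)\ge0$ for all $f\in\mathbb{R}[\underline{X}]^G$.
   Context: $\mathbb{R}[\underline{X}]=\mathbb{R}[X_1,\dots,X_n]$ and $\mathbb{R}[\underline{X}]^G=\mathbb{R}[\pi_1,\dots,\pi_m]$. For polynomials $p,q$, $\langle dp,dq\rangle=\sum_{j=1}^n\frac{\partial p}{\partial X_j}\frac{\partial q}{\partial X_j}$; for $G$-invariant $p,q$ this is $G$-invariant, so $M_\Pi$ has entries in $\mathbb{R}[\underline{X}]^G$. $I_\Pi$ is the ideal of relations among $\pi_1,\dots,\pi_m$, $V_{\mathbb{R}}(I_\Pi)\subseteq\mathbb{R}^m$ its real zero set, and for $z\in V_{\mathbb{R}}(I_\Pi)$, $\phi_z:\mathbb{R}[\underline{X}]^G\to\mathbb{R}$ is $g(\pi_1,\dots,\pi_m)\mapsto g(z)$, applied entrywise to matrices. *)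

From HB Require Import structures.
From mathcomp Require Import all_boot all_order all_algebra.
From mathcomp Require Import reals.
From mathcomp Require Import mpoly.
From Stdlib Require Import ClassicalEpsilon.

Set Implicit Arguments.
Unset Strict Implicit.
Unset Printing Implicit Defensive.
Import Order.TTheory GRing.Theory Num.Theory.
Local Open Scope ring_scope.

Section Defs.
Variable R : realType.

Definition finite_orthogonal_group (n : nat) (G : seq 'M[R]_n) : Prop :=
  [/\ 1%:M \in G,
      (forall A B, A \in G -> B \in G -> A *m B \in G),
      (forall A, A \in G -> A^T \in G) &
      (forall A, A \in G -> A *m A^T = 1%:M)].

Definition mat_act (n : nat) (A : 'M[R]_n) (p : {mpoly R[n]}) : {mpoly R[n]} :=
  p \mPo [tuple \sum_(j < n) A i j *: 'X_j | i < n].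

Definition G_invariant (n : nat) (G : seq 'M[R]_n) (p : {mpoly R[n]}) : Prop :=
  forall A, A \in G -> mat_act A p = p.

Definition pitup (n m : nat) (pi : 'I_m -> {mpoly R[n]}) : m.-tuple {mpoly R[n]} :=
  [tuple pi i | i < m].

(* pi_1..pi_m is a minimal homogeneous generating set of R[X]^G *)
Definition fundamental_invariants (n m : nat) (G : seq 'M[R]_n)
    (pi : 'I_m -> {mpoly R[n]}) : Prop :=
  [/\ (forall i, G_invariant G (pi i)),
      (forall i, exists d : nat, pi i \is d.-homog),
      (forall f, G_invariant G f -> exists g : {mpoly R[m]}, f = g \mPo pitup pi) &
      (forall i, ~ exists g : {mpoly R[m]},
            (forall mm, mm \in msupp g -> mm i = 0%N) /\ pi i = g \mPo pitup pi)].

Definition dprod (n : nat) (p q : {mpoly R[n]}) : {mpoly R[n]} :=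
  \sum_(j < n) mderiv j p * mderiv j q.

Definition MPi (n m : nat) (pi : 'I_m -> {mpoly R[n]}) : 'M[{mpoly R[n]}]_m :=
  \matrix_(i, j) dprod (pi i) (pi j).

Definition in_VR_IPi (n m : nat) (pi : 'I_m -> {mpoly R[n]}) (z : 'I_m -> R) : Prop :=
  forall g : {mpoly R[m]}, g \mPo pitup pi = 0 -> g.@[z] = 0.

(* phi_z : g(pi) |-> g(z), using a chosen representative g *)
Definition inv_repr (n m : nat) (pi : 'I_m -> {mpoly R[n]}) (f : {mpoly R[n]})
  : {mpoly R[m]} :=
  epsilon (inhabits 0) (fun g : {mpoly R[m]} => g \mPo pitup pi = f).

Definition phi_z (n m : nat) (pi : 'I_m -> {mpoly R[n]}) (z : 'I_m -> R)
    (f : {mpoly R[n]}) : R :=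
  (inv_repr pi f).@[z].

Definition psd (m : nat) (S : 'M[R]_m) : Prop :=
  forall v : 'cV[R]_m, 0 <= (v^T *m S *m v) 0 0.

Definition hilbert_map (n m : nat) (pi : 'I_m -> {mpoly R[n]}) (x : 'I_n -> R)
  : 'I_m -> R := fun i => (pi i).@[x].

(* phi is a ring homomorphism R[X]^G -> R (values off R[X]^G are irrelevant) *)
Definition inv_ring_hom (n : nat) (G : seq 'M[R]_n) (phi : {mpoly R[n]} -> R) : Prop :=
  [/\ phi 1 = 1,
      (forall f g, G_invariant G f -> G_invariant G g -> phi (f + g) = phi f + phi g) &
      (forall f g, G_invariant G f -> G_invariant G g -> phi (f * g) = phi f * phi g)].

End Defs.

From HB Require Import structures.
From mathcomp Require Import all_boot all_order all_algebra.
From mathcomp Require Import reals.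
From mathcomp Require Import mpoly.
From Stdlib Require Import ClassicalEpsilon.

Set Implicit Arguments.
Unset Strict Implicit.
Unset Printing Implicit Defensive.
Import Order.TTheory GRing.Theory Num.Theory.
Local Open Scope ring_scope.

(* A ring homomorphism phi : R[X]^G -> R is determined by the point
   z = (phi pi_1, ..., phi pi_m) of V_R(I_Pi): it fixes the constants (R has
   no ring endomorphism but the identity), hence phi (g o Pi) = g(z), i.e.
   phi = phi_z.  Such a phi extends to R[X] iff it is the evaluation at some
   x in R^n, i.e. iff z = Pi(x).  By the chain rule
   <d(g o Pi), d(g o Pi)> = grad(g)(Pi)^T M_Pi grad(g)(Pi), and taking g linear
   realises every vector as a gradient, so phi(<df,df>) >= 0 for all invariant
   f iff phi_z(M_Pi) is positive semi-definite.  Since moreover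
   Pi(R^n) is contained in V_R(I_Pi), both (i) and (ii) say that a point z of
   V_R(I_Pi) lies in Pi(R^n) iff phi_z(M_Pi) is positive semi-definite. *)

Lemma archiRcf_rmorph_id (R : archiRcfType) (f : {rmorphism R -> R}) : f =1 id.
Proof.
have f_mono x y : x <= y -> f x <= f y.
  rewrite -subr_ge0 -[f x <= _]subr_ge0 -rmorphB => /sqr_sqrtr <-.
  by rewrite rmorphXn sqr_ge0.
have le_f x : x <= f x.
  rewrite leNgt; apply/negP => /rat_in_itvoo[q].
  rewrite in_itv /= => /andP[lt_fx_q lt_q_x].
  by have := f_mono _ _ (ltW lt_q_x); rewrite fmorph_rat leNgt lt_fx_q.
by move=> x; apply/eqP; rewrite eq_le le_f andbT -lerN2 -rmorphN le_f.
Qed.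

Lemma quad_formE (R : comNzRingType) (k : nat) (S : 'M[R]_k) (v : 'cV[R]_k) :
  (v^T *m S *m v) 0 0 = \sum_(i < k) \sum_(j < k) v i 0 * v j 0 * S i j.
Proof.
rewrite mxE; under eq_bigr => j _ do rewrite mxE mulr_suml.
rewrite exchange_big /=; apply: eq_bigr => i _; apply: eq_bigr => j _.
by rewrite !mxE mulrAC.
Qed.

Section MPolyRing.
Variable R : nzRingType.

Lemma mpoly_ring_ind (k : nat) (P : {mpoly R[k]} -> Prop) :
  (forall c, P c%:MP) -> (forall i, P 'X_i) ->
  (forall p q, P p -> P q -> P (p + q)) ->
  (forall p q, P p -> P q -> P (p * q)) -> forall p, P p.
Proof.
move=> PC PX PD PM p; rewrite (mpolyE p).
have P0 : P 0 by rewrite -mpolyC0.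
have P1 : P 1 by rewrite -mpolyC1.
have PXn i e : P ('X_i ^+ e).
  by elim: e => [|e IHe]; rewrite ?expr0 // exprS; apply: (PM).
apply: (big_ind P) => // mm _; rewrite -mul_mpolyC mpolyXE_id.
apply: (PM) => //; apply: (big_ind P) => // i _; exact: PXn.
Qed.

Lemma mderivXU (k : nat) (l j : 'I_k) :
  mderiv l ('X_j : {mpoly R[k]}) = ((j == l)%:R)%:MP.
Proof.
rewrite mderivX mnm1E; case: eqP => [->|_]; last by rewrite scale0r mpolyC0.
have -> : (U_(l) - U_(l) = 0)%MM by apply/mnmP => i; rewrite mnmBE mnm0E subnn.
by rewrite mpolyX0 scale1r mpolyC1.
Qed.

Lemma mderiv_linear (k : nat) (c : 'I_k -> R) (l : 'I_k) :
  mderiv l (\sum_(j < k) c j *: ('X_j : {mpoly R[k]})) = (c l)%:MP.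
Proof.
rewrite raddf_sum (bigD1 l) //= big1 ?addr0 => [|j /negbTE neq_jl].
  by rewrite mderivZ mderivXU eqxx mpolyC1 -mul_mpolyC mulr1.
by rewrite mderivZ mderivXU neq_jl mpolyC0 scaler0.
Qed.

End MPolyRing.

Section MPolyCalculus.
Variable R : comNzRingType.

Lemma mderiv_comp (k n : nat) (t : k.-tuple {mpoly R[n]}) (g : {mpoly R[k]})
    (j : 'I_n) :
  mderiv j (g \mPo t) = \sum_(i < k) (mderiv i g \mPo t) * mderiv j (tnth t i).
Proof.
elim/mpoly_ring_ind: g => [c | i | p q IHp IHq | p q IHp IHq].
- rewrite comp_mpolyC mderivC big1 // => i _.
  by rewrite mderivC comp_mpoly0 mul0r.
- rewrite comp_mpolyXU (bigD1 i) //= mderivXU eqxx comp_mpolyC mpolyC1 mul1r.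
  rewrite big1 ?addr0 => [|l /negbTE neq_li]; first by rewrite (tnth_nth 0).
  by rewrite mderivXU eq_sym neq_li mpolyC0 comp_mpoly0 mul0r.
- rewrite comp_mpolyD mderivD IHp IHq -big_split /=.
  by apply: eq_bigr => i _; rewrite mderivD comp_mpolyD mulrDl.
- rewrite rmorphM /= mderivM IHp IHq mulr_suml mulr_sumr -big_split /=.
  apply: eq_bigr => i _; rewrite mderivM comp_mpolyD !rmorphM /= mulrDl.
  by congr (_ + _); rewrite -!mulrA; congr (_ * _); rewrite mulrC.
Qed.

Definition mgrad (k : nat) (g : {mpoly R[k]}) (z : 'I_k -> R) : 'cV[R]_k :=
  \col_i (mderiv i g).@[z].

Lemma mgrad_linear (k : nat) (v : 'cV[R]_k) (z : 'I_k -> R) :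
  mgrad (\sum_(j < k) v j 0 *: 'X_j) z = v.
Proof. by apply/matrixP => i j; rewrite !mxE mderiv_linear mevalC ord1. Qed.

End MPolyCalculus.

Lemma rmorph_mpolyE (R : archiRcfType) (n : nat)
    (psi : {rmorphism {mpoly R[n]} -> R}) (p : {mpoly R[n]}) :
  psi p = p.@[fun j => psi 'X_j].
Proof.
have psiC c : psi c%:MP = c.
  exact: (archiRcf_rmorph_id (psi \o @mpolyC n R : {rmorphism R -> R})).
elim/mpoly_ring_ind: p => [c | i | p q IHp IHq | p q IHp IHq].
- by rewrite psiC mevalC.
- by rewrite mevalXU.
- by rewrite rmorphD IHp IHq mevalD.
- by rewrite rmorphM /= IHp IHq mevalM.
Qed.

Section DotProduct.
Variable R : realType.

Lemma dprod_comp (k n : nat) (t : k.-tuple {mpoly R[n]}) (g h : {mpoly R[k]}) :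
  dprod (g \mPo t) (h \mPo t) = \sum_(i < k) \sum_(j < k)
    (mderiv i g \mPo t) * (mderiv j h \mPo t) * dprod (tnth t i) (tnth t j).
Proof.
rewrite /dprod; under eq_bigr => l _ do rewrite !mderiv_comp big_distrlr /=.
rewrite exchange_big /=; apply: eq_bigr => i _.
rewrite exchange_big /=; apply: eq_bigr => j _.
rewrite mulr_sumr; apply: eq_bigr => l _.
by rewrite -!mulrA; congr (_ * _); rewrite mulrCA.
Qed.

Lemma dprod_linear (n : nat) (A : 'M[R]_n) (i j : 'I_n) :
  dprod (\sum_(l < n) A i l *: 'X_l) (\sum_(l < n) A j l *: 'X_l)
  = ((A *m A^T) i j)%:MP.
Proof.
rewrite /dprod; under eq_bigr => l _ do rewrite !mderiv_linear -rmorphM.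
by rewrite -rmorph_sum mxE; congr _%:MP; apply: eq_bigr => l _; rewrite mxE.
Qed.

Lemma mat_act_dprod (n : nat) (A : 'M[R]_n) (p q : {mpoly R[n]}) :
  A *m A^T = 1%:M ->
  mat_act A (dprod p q) = dprod (mat_act A p) (mat_act A q).
Proof.
move=> A_orth; rewrite /mat_act dprod_comp.
under eq_bigr => i _ do under eq_bigr => j _ do
  rewrite !tnth_mktuple dprod_linear A_orth mxE.
rewrite /dprod rmorph_sum /=; apply: eq_bigr => i _.
rewrite (bigD1 i) //= big1 ?addr0 => [|j /negbTE neq_ji]; last first.
  by rewrite eq_sym neq_ji mpolyC0 mulr0.
by rewrite eqxx mpolyC1 mulr1 rmorphM.
Qed.

End DotProduct.

Section Invariants.
Variables (R : realType) (n m : nat) (G : seq 'M[R]_n) (pi : 'I_m -> {mpoly R[n]}).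

Lemma G_invariantC c : G_invariant G c%:MP.
Proof. by move=> A _; rewrite /mat_act comp_mpolyC. Qed.

Lemma G_invariantD f g :
  G_invariant G f -> G_invariant G g -> G_invariant G (f + g).
Proof. by move=> Gf Gg A GA; rewrite /mat_act comp_mpolyD -!/(mat_act _ _) Gf ?Gg. Qed.

Lemma G_invariantM f g :
  G_invariant G f -> G_invariant G g -> G_invariant G (f * g).
Proof. by move=> Gf Gg A GA; rewrite /mat_act rmorphM /= -!/(mat_act _ _) Gf ?Gg. Qed.

Lemma G_invariant_sum (k : nat) (F : 'I_k -> {mpoly R[n]}) :
  (forall i, G_invariant G (F i)) -> G_invariant G (\sum_(i < k) F i).
Proof.
move=> GF; apply: big_ind => [|f g|i _]; last exact: GF.
  by rewrite -mpolyC0; apply: G_invariantC.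
exact: G_invariantD.
Qed.

Lemma comp_pitupXU i : 'X_i \mPo pitup pi = pi i.
Proof. by rewrite comp_mpolyXU -tnth_nth tnth_mktuple. Qed.

Lemma meval_comp_pitup (g : {mpoly R[m]}) x :
  (g \mPo pitup pi).@[x] = g.@[hilbert_map pi x].
Proof. by rewrite comp_mpoly_meval; apply: meval_eq => i; rewrite tnth_mktuple. Qed.

Hypothesis G_orth : forall A, A \in G -> A *m A^T = 1%:M.
Hypothesis pi_inv : forall i, G_invariant G (pi i).
Hypothesis pi_gen : forall f, G_invariant G f -> exists g, f = g \mPo pitup pi.

Lemma G_invariant_dprod f g :
  G_invariant G f -> G_invariant G g -> G_invariant G (dprod f g).
Proof. by move=> Gf Gg A GA; rewrite mat_act_dprod ?G_orth // Gf ?Gg. Qed.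

Lemma G_invariant_comp g : G_invariant G (g \mPo pitup pi).
Proof.
elim/mpoly_ring_ind: g => [c | i | p q | p q].
- by rewrite comp_mpolyC; apply: G_invariantC.
- by rewrite comp_pitupXU.
- by rewrite comp_mpolyD; apply: G_invariantD.
- by rewrite rmorphM; apply: G_invariantM.
Qed.

Definition extendable (phi : {mpoly R[n]} -> R) : Prop :=
  exists psi : {rmorphism {mpoly R[n]} -> R},
    forall f, G_invariant G f -> psi f = phi f.

Definition dprod_nonneg (phi : {mpoly R[n]} -> R) : Prop :=
  forall f, G_invariant G f -> 0 <= phi (dprod f f).

Definition in_hilbert_image (z : 'I_m -> R) : Prop :=
  exists x, hilbert_map pi x =1 z.

Lemma rmorph_inv_ring_hom (psi : {rmorphism {mpoly R[n]} -> R}) :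
  inv_ring_hom G psi.
Proof. by split=> [|f g _ _|f g _ _]; rewrite ?rmorph1 ?rmorphD ?rmorphM. Qed.

Lemma phi_zE z g : in_VR_IPi pi z -> phi_z pi z (g \mPo pitup pi) = g.@[z].
Proof.
rewrite /phi_z /inv_repr => zV.
have := epsilon_spec (inhabits 0) (fun h => h \mPo pitup pi = g \mPo pitup pi)
  (ex_intro _ g erefl).
set h := epsilon _ _ => h_repr.
by apply/eqP; rewrite -subr_eq0 -mevalB zV // comp_mpolyB h_repr subrr.
Qed.

Section InvRingHom.
Variable phi : {mpoly R[n]} -> R.
Hypothesis phi_hom : inv_ring_hom G phi.

Lemma inv_ring_homC c : phi c%:MP = c.
Proof.
have [phi1 phiD phiM] := phi_hom.
have phiC1 : phi 1%:MP = 1 by rewrite mpolyC1.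
have phiCD x y : phi (x + y)%:MP = phi x%:MP + phi y%:MP.
  by rewrite mpolyCD phiD //; apply: G_invariantC.
have phiCB x y : phi (x - y)%:MP = phi x%:MP - phi y%:MP.
  by apply/eqP; rewrite eq_sym subr_eq -phiCD subrK.
have phiCM x y : phi (x * y)%:MP = phi x%:MP * phi y%:MP.
  by rewrite mpolyCM phiM //; apply: G_invariantC.
pose phiC : {rmorphism R -> R} := HB.pack (fun x => phi x%:MP)
  (GRing.isZmodMorphism.Build _ _ _ phiCB)
  (GRing.isMonoidMorphism.Build _ _ _ (conj phiC1 phiCM)).
exact: (archiRcf_rmorph_id phiC).
Qed.

Lemma inv_ring_hom_sum (k : nat) (F : 'I_k -> {mpoly R[n]}) :
  (forall i, G_invariant G (F i)) ->
  phi (\sum_(i < k) F i) = \sum_(i < k) phi (F i).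
Proof.
have [_ phiD _] := phi_hom.
elim: k F => [|k IHk] F GF; first by rewrite !big_ord0 -mpolyC0 inv_ring_homC.
rewrite !big_ord_recr /= phiD ?IHk //; last exact: G_invariant_sum.
Qed.

Lemma inv_ring_hom_comp g : phi (g \mPo pitup pi) = g.@[fun i => phi (pi i)].
Proof.
have [_ phiD phiM] := phi_hom.
elim/mpoly_ring_ind: g => [c | i | p q IHp IHq | p q IHp IHq].
- by rewrite comp_mpolyC mevalC inv_ring_homC.
- by rewrite comp_pitupXU mevalXU.
- by rewrite comp_mpolyD phiD ?IHp ?IHq ?mevalD //; apply: G_invariant_comp.
- by rewrite rmorphM /= phiM ?IHp ?IHq ?mevalM //; apply: G_invariant_comp.
Qed.

Lemma inv_ring_hom_dprod_comp g :
  phi (dprod (g \mPo pitup pi) (g \mPo pitup pi))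
  = ((mgrad g (fun i => phi (pi i)))^T *m map_mx phi (MPi pi)
     *m mgrad g (fun i => phi (pi i))) 0 0.
Proof.
have [_ _ phiM] := phi_hom.
have Gcomp i := G_invariant_comp (mderiv i g).
have GM i j := G_invariant_dprod (pi_inv i) (pi_inv j).
have Gterm i j : G_invariant G ((mderiv i g \mPo pitup pi)
    * (mderiv j g \mPo pitup pi) * dprod (tnth (pitup pi) i) (tnth (pitup pi) j)).
  by rewrite !tnth_mktuple; apply: G_invariantM (G_invariantM (Gcomp i) (Gcomp j)) (GM i j).
rewrite dprod_comp quad_formE inv_ring_hom_sum => [|i]; last first.
  by apply: G_invariant_sum => j; apply: Gterm.
apply: eq_bigr => i _; rewrite inv_ring_hom_sum //; apply: eq_bigr => j _.
rewrite !tnth_mktuple (phiM _ _ (G_invariantM (Gcomp i) (Gcomp j)) (GM i j)).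
rewrite (phiM _ _ (Gcomp i) (Gcomp j)) !inv_ring_hom_comp !mxE.
by congr (_ * _ * _); apply: meval_eq.
Qed.

Lemma dprod_nonneg_psd : dprod_nonneg phi <-> psd (map_mx phi (MPi pi)).
Proof.
split=> [phi_nonneg v | phi_psd f /pi_gen [g ->]].
  have := phi_nonneg _ (G_invariant_comp (\sum_(j < m) v j 0 *: 'X_j)).
  by rewrite inv_ring_hom_dprod_comp mgrad_linear.
by rewrite inv_ring_hom_dprod_comp.
Qed.

Variable z : 'I_m -> R.
Hypothesis phi_pi : forall i, phi (pi i) = z i.

Lemma inv_ring_hom_VR : in_VR_IPi pi z.
Proof.
move=> g g0.
by rewrite -(meval_eq g phi_pi) -inv_ring_hom_comp g0 -mpolyC0 inv_ring_homC.
Qed.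

Lemma inv_ring_hom_phi_z f : G_invariant G f -> phi f = phi_z pi z f.
Proof.
move=> /pi_gen [g ->]; rewrite phi_zE; last exact: inv_ring_hom_VR.
by rewrite inv_ring_hom_comp; apply: meval_eq.
Qed.

Lemma extendableP : extendable phi <-> in_hilbert_image z.
Proof.
split=> [[psi psi_phi] | [x Pix]].
  exists (fun j => psi 'X_j) => i.
  by rewrite /hilbert_map -rmorph_mpolyE psi_phi.
exists (GRing.RMorphism.clone _ _ (meval x) _) => _ /pi_gen [g ->] /=.
rewrite meval_comp_pitup inv_ring_hom_comp.
by apply: meval_eq => i; rewrite phi_pi Pix.
Qed.

End InvRingHom.

Lemma hilbert_image_VR z : in_hilbert_image z -> in_VR_IPi pi z.
Proof.
case=> x Pix.
exact: (inv_ring_hom_VR (rmorph_inv_ring_hom (GRing.RMorphism.clone _ _ (meval x) _)) Pix).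
Qed.

Section PhiZ.
Variable z : 'I_m -> R.
Hypothesis zV : in_VR_IPi pi z.

Lemma phi_z_pi i : phi_z pi z (pi i) = z i.
Proof. by rewrite -comp_pitupXU phi_zE // mevalXU. Qed.

Lemma phi_z_inv_ring_hom : inv_ring_hom G (phi_z pi z).
Proof.
split=> [|_ _ /pi_gen [g ->] /pi_gen [h ->]|_ _ /pi_gen [g ->] /pi_gen [h ->]].
- by rewrite -(comp_mpoly1 (pitup pi)) phi_zE // meval1.
- by rewrite -comp_mpolyD !phi_zE // mevalD.
- by rewrite -rmorphM !phi_zE // mevalM.
Qed.

End PhiZ.

Lemma map_mx_phi_z phi z :
  inv_ring_hom G phi -> (forall i, phi (pi i) = z i) ->
  map_mx (phi_z pi z) (MPi pi) = map_mx phi (MPi pi).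
Proof.
move=> phi_hom phi_pi; apply/matrixP => i j; rewrite !mxE.
by rewrite (inv_ring_hom_phi_z phi_hom phi_pi) //; apply: G_invariant_dprod.
Qed.

End Invariants.

Theorem proposition2p7 (R : realType) (n m : nat) (G : seq 'M[R]_n)
    (pi : 'I_m -> {mpoly R[n]}) :
  finite_orthogonal_group G ->
  fundamental_invariants G pi ->
  ((forall z : 'I_m -> R,
      (exists x : 'I_n -> R, hilbert_map pi x =1 z) <->
      (in_VR_IPi pi z /\ psd (map_mx (phi_z pi z) (MPi pi))))
   <->
   (forall phi : {mpoly R[n]} -> R, inv_ring_hom G phi ->
      ((exists psi : {rmorphism {mpoly R[n]} -> R},
          forall f, G_invariant G f -> psi f = phi f)
       <-> (forall f, G_invariant G f -> 0 <= phi (dprod f f))))).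
Proof.
move=> [_ _ _ G_orth] [pi_inv _ pi_gen _].
split=> [image_iff phi phi_hom | extendable_iff z].
- pose z i := phi (pi i); have phi_pi : forall i, phi (pi i) = z i by [].
  have zV := inv_ring_hom_VR pi_inv phi_hom phi_pi.
  apply: iff_trans (extendableP pi_inv pi_gen phi_hom phi_pi) _.
  apply: iff_trans (image_iff z) _.
  rewrite (map_mx_phi_z G_orth pi_inv pi_gen phi_hom phi_pi).
  apply: iff_trans _ (iff_sym (dprod_nonneg_psd G_orth pi_inv pi_gen phi_hom)).
  by split=> [[] | /(conj zV)].
- have image_psd : in_VR_IPi pi z ->
      in_hilbert_image pi z <-> psd (map_mx (phi_z pi z) (MPi pi)).
    move=> zV; have phi_z_hom := phi_z_inv_ring_hom pi_gen zV.
    apply: iff_trans (iff_sym (extendableP pi_inv pi_gen phi_z_hom (phi_z_pi zV))) _.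
    apply: iff_trans (extendable_iff _ phi_z_hom) _.
    exact: dprod_nonneg_psd.
  split=> [z_image | [zV]]; last exact: (image_psd zV).2.
  have zV := hilbert_image_VR pi_inv z_image.
  by split; last exact: (image_psd zV).1.
Qed.
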